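(* Let $(X,d)$ be a compact metric space and $f:X\to X$ continuous such that $f|_{CR(f)}$ has the shadowing property. Let $(x,y)\in CR(f)^2$ with $x\ne y$ and $x\sim y$. Then for every $0<\epsilon<\frac12 d(x,y)$ there is an integer $a>0$ such that $h(f,\{X\setminus \overline{B}... \})$; precisely, $h(f,\{X\setminus B_\epsilon(x), X\setminus B_\epsilon(y)\})\ge a^{-1}\log 2>0$, and consequently $(x,y)\in E(X,f)$.
   Context: $B_\epsilon(p)$ is the open $\epsilon$-ball about $p$ (so $\{X\setminus B_\epsilon(x),X\setminus B_\epsilon(y)\}$ is a closed cover; entropy relative to it is defined as for open covers via $\lim_n\frac1n\log$ of the minimal cardinality of subcovers of the joins $\bigvee_{i=0}^{n-1}f^{-i}\mathcal U$). A $\delta$-chain of $f$ is a finite sequence $(x_i)_{i=0}^k$, $k\ge1$, with $d(f(x_i),x_{i+1})\le\delta$; a $\delta$-cycle is a $\delta$-chain with $x_0=x_k$. $CR(f)$ is the set of points $x$ such that for every $\delta>0$ there is a $\delta$-cycle starting and ending at $x$. For $x,y\in CR(f)$, $x\sim y$ iff for every $\delta>0$ there are integers $m>0$, $N>0$ such that for every $n\ge N$ there are $\delta$-chains $(x_i)_{i=0}^{mn},(y_i)_{i=0}^{mn}$ in $CR(f)$ with $x_0=y_{mn}=x$, $x_{mn}=y_0=y$. Shadowing property of $g:Y\to Y$: for every $\epsilon>0$ there is $\delta>0$ such that every $\delta$-pseudo orbit $(y_i)_{i\ge 0}$ ($d(g(y_i),y_{i+1})\le\delta$) is $\epsilon$-shadowed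 by some $y\in Y$ ($d(g^i(y),y_i)\le\epsilon$ for all $i$). An entropy pair is $(x,y)$, $x\ne y$, such that for all disjoint closed neighborhoods $A\ni x$, $B\ni y$, $h(f,\{X\setminus A,X\setminus B\})>0$; $E(X,f)$ is the set of entropy pairs. *)

From Stdlib Require Import Reals Lra Lia List.
Open Scope R_scope.

Section Dyn.
Context {X : Type} (d : X -> X -> R).

Definition is_metric : Prop :=
  (forall x y, 0 <= d x y) /\
  (forall x y, d x y = 0 <-> x = y) /\
  (forall x y, d x y = d y x) /\
  (forall x y z, d x z <= d x y + d y z).

Definition ball (p : X) (r : R) : X -> Prop := fun z => d p z < r.

Definition is_open (U : X -> Prop) : Prop :=
  forall x, U x -> exists r, 0 < r /\ forall z, ball x r z -> U z.

Definition is_closed (A : X -> Prop) : Prop := is_open (fun z => ~ A z).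

Definition compact_space : Prop :=
  forall (I : Type) (U : I -> X -> Prop),
    (forall i, is_open (U i)) -> (forall x, exists i, U i x) ->
    exists l : list I, forall x, exists i, In i l /\ U i x.

Definition continuous (f : X -> X) : Prop :=
  forall x eps, 0 < eps -> exists delta, 0 < delta /\
    forall z, d x z < delta -> d (f x) (f z) < eps.

Definition chain (f : X -> X) (delta : R) (s : nat -> X) (k : nat) : Prop :=
  (1 <= k)%nat /\ forall i, (i < k)%nat -> d (f (s i)) (s (S i)) <= delta.

Definition CR (f : X -> X) (x : X) : Prop :=
  forall delta, 0 < delta -> exists s k, chain f delta s k /\ s 0%nat = x /\ s k = x.

Definition chain_rel (f : X -> X) (x y : X) : Prop :=
  forall delta, 0 < delta -> exists m N : nat, (0 < m)%nat /\ (0 < N)%nat /\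
    forall n, (N <= n)%nat ->
      exists sx sy : nat -> X,
        chain f delta sx (m * n) /\ chain f delta sy (m * n) /\
        (forall i, (i <= m * n)%nat -> CR f (sx i) /\ CR f (sy i)) /\
        sx 0%nat = x /\ sx (m * n)%nat = y /\ sy 0%nat = y /\ sy (m * n)%nat = x.

Definition shadowing_on_CR (f : X -> X) : Prop :=
  forall eps, 0 < eps -> exists delta, 0 < delta /\
    forall ys : nat -> X,
      (forall i, CR f (ys i)) ->
      (forall i, d (f (ys i)) (ys (S i)) <= delta) ->
      exists y, CR f y /\ forall i, d (Nat.iter i f y) (ys i) <= eps.

(* Covers are finite lists of subsets. An element of the join
   \/_{i=0}^{n-1} f^{-i} U is indexed by a word w : nat -> nat with
   w i < length U for i < n; it is the set of z with f^i z in U_{w i}. *)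
Definition word_ok (U : list (X -> Prop)) (n : nat) (w : nat -> nat) : Prop :=
  forall i, (i < n)%nat -> (w i < length U)%nat.

Definition join_member (f : X -> X) (U : list (X -> Prop)) (n : nat)
  (w : nat -> nat) : X -> Prop :=
  fun z => forall i, (i < n)%nat -> nth (w i) U (fun _ => True) (Nat.iter i f z).

Definition join_subcover_card (f : X -> X) (U : list (X -> Prop)) (n k : nat) : Prop :=
  exists ws : list (nat -> nat), length ws = k /\
    (forall w, In w ws -> word_ok U n w) /\
    forall z, exists w, In w ws /\ join_member f U n w z.

Definition min_subcover_card (f : X -> X) (U : list (X -> Prop)) (n k : nat) : Prop :=
  join_subcover_card f U n k /\ forall k', join_subcover_card f U n k' -> (k <= k')%nat.

Definition cover_entropy (f : X -> X) (U : list (X -> Prop)) (h : R) : Prop :=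
  exists N : nat -> nat,
    (forall n, min_subcover_card f U n (N n)) /\
    Un_cv (fun n => ln (INR (N (S n))) / INR (S n)) h.

Definition closed_nbhd (A : X -> Prop) (p : X) : Prop :=
  is_closed A /\ exists r, 0 < r /\ forall z, ball p r z -> A z.

Definition entropy_pair (f : X -> X) (x y : X) : Prop :=
  x <> y /\
  forall A B : X -> Prop,
    closed_nbhd A x -> closed_nbhd B y -> (forall z, A z -> B z -> False) ->
    exists h, cover_entropy f ((fun z => ~ A z) :: (fun z => ~ B z) :: nil) h /\ 0 < h.

End Dyn.

(* Let x ~ y be distinct chain recurrent points and let A, B be disjoint sets
   containing the eps-balls about x and y.  The proof has three parts.

   Subcovers of the joins of a cover U multiply
      under concatenation of words, so the minimal cardinalities N(n) are
      submultiplicative; Fekete's lemma for the subadditive sequence ln N(n)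
      shows that ln N(n)/n converges, i.e. h(f,U) exists.
   2. Realising itineraries.  The relation x ~ y yields, for every delta,
      a length a and delta-chains in CR(f) of length a between any two points
      of {x, y}.  Splicing them along an arbitrary binary itinerary s gives a
      delta-pseudo orbit in CR(f), which is (eps/2)-shadowed by an orbit
      visiting the eps-ball of y at time a j when s j is true and that of x
      otherwise.
   3. Counting.  A member of the (a k)-join of {X \ A, X \ B} determines the
      itinerary of such an orbit at times 0, a, ..., a(k-1), so any subcover
      has at least 2^k members and h(f, {X \ A, X \ B}) >= ln 2 / a.
   The theorem follows with A, B the balls themselves (disjoint as
   eps < d(x,y)/2), and for entropy pairs with A, B closed neighbourhoods. *)

From Stdlib Require Import Reals Lra Lia List Classical ClassicalEpsilon Wf_nat.
Open Scope R_scope.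

Lemma ln_le_compat (u v : R) : 0 < u -> u <= v -> ln u <= ln v.
Proof.
  intros Hu Huv. destruct (Rle_lt_or_eq_dec _ _ Huv) as [Hlt | ->].
  - left. apply ln_increasing; assumption.
  - apply Rle_refl.
Qed.

Lemma Un_cv_ge_frequently (u : nat -> R) (l c : R) :
  Un_cv u l -> (forall N, exists n, (N <= n)%nat /\ c <= u n) -> c <= l.
Proof.
  intros Hcv Hfreq. apply Rnot_lt_le. intros Hlc.
  destruct (Hcv (c - l)) as [N HN]; [lra|].
  destruct (Hfreq N) as [n [Hn Hc]].
  specialize (HN n Hn). unfold R_dist in HN. apply Rabs_def2 in HN. lra.
Qed.

Section Fekete.
Variable b : nat -> R.
Hypothesis b_nonneg : forall n, 0 <= b n.
Hypothesis b_subadd : forall m n, b (m + n)%nat <= b m + b n.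

Lemma subadd_linear_bound (r : nat) : b r <= b 0%nat + INR r * b 1%nat.
Proof.
  induction r as [|r IH]; [simpl; lra|].
  rewrite S_INR. pose proof (b_subadd 1 r) as H. simpl (1 + r)%nat in H. lra.
Qed.

Lemma subadd_blocks (q k r : nat) : b (k * q + r)%nat <= INR k * b q + b r.
Proof.
  induction k as [|k IH]; [simpl; lra|].
  replace (S k * q + r)%nat with (q + (k * q + r))%nat by lia.
  rewrite S_INR. pose proof (b_subadd q (k * q + r)). lra.
Qed.

(* Cutting n into blocks of length q: b n / n <= b q / q + M_q / n. *)
Lemma subadd_ratio_bound (q n : nat) : (0 < q)%nat -> (0 < n)%nat ->
  b n / INR n <= b q / INR q + (b 0%nat + INR q * b 1%nat) / INR n.
Proof.
  intros Hq Hn.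
  assert (HqR : 0 < INR q) by (apply lt_0_INR; lia).
  assert (HnR : 0 < INR n) by (apply lt_0_INR; lia).
  pose proof (Nat.div_mod_eq n q) as Hdiv.
  pose proof (Nat.mod_upper_bound n q ltac:(lia)) as Hr.
  set (k := (n / q)%nat) in *. set (r := (n mod q)%nat) in *.
  set (t := b q / INR q). set (M := b 0%nat + INR q * b 1%nat).
  assert (Hbq : b q = t * INR q) by (unfold t; field; lra).
  assert (Ht : 0 <= t)
    by (apply Rmult_le_pos; [apply b_nonneg | left; apply Rinv_0_lt_compat, HqR]).
  assert (Hkq : INR k * INR q <= INR n)
    by (rewrite <- mult_INR; apply le_INR; lia).
  assert (Hbr : b r <= M).
  { pose proof (subadd_linear_bound r). pose proof (b_nonneg 1).
    assert (INR r <= INR q) by (apply le_INR; lia). unfold M. nra. }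
  assert (Hbn : b n <= INR n * t + M).
  { rewrite Hdiv at 1. replace (q * k + r)%nat with (k * q + r)%nat by lia.
    pose proof (subadd_blocks q k r). rewrite Hbq in *. nra. }
  replace (t + M / INR n) with ((INR n * t + M) / INR n) by (field; lra).
  unfold Rdiv. apply Rmult_le_compat_r; [left; apply Rinv_0_lt_compat|]; lra.
Qed.

Lemma ratio_infimum : exists L, (forall n, L <= b (S n) / INR (S n)) /\
  forall eps, 0 < eps -> exists n, b (S n) / INR (S n) < L + eps.
Proof.
  set (E := fun r => exists n, r = - (b (S n) / INR (S n))).
  assert (Hratio : forall n, 0 <= b (S n) / INR (S n)).
  { intro n. unfold Rdiv. apply Rmult_le_pos; [apply b_nonneg|].
    left. apply Rinv_0_lt_compat, lt_0_INR. lia. }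
  assert (Hbound : bound E) by (exists 0; intros r [n ->]; specialize (Hratio n); lra).
  destruct (completeness E Hbound (ex_intro _ _ (ex_intro _ 0%nat eq_refl)))
    as [m [Hub Hlub]].
  exists (- m). split.
  - intro n. assert (m >= - (b (S n) / INR (S n))) by (apply Rle_ge, Hub; now exists n).
    lra.
  - intros eps Heps. apply NNPP. intros Hnone.
    assert (Hub' : is_upper_bound E (m - eps)).
    { intros r [n ->]. assert (~ b (S n) / INR (S n) < - m + eps) by eauto. lra. }
    specialize (Hlub _ Hub'). lra.
Qed.

Lemma fekete : exists L, Un_cv (fun n => b (S n) / INR (S n)) L.
Proof.
  destruct ratio_infimum as [L [Hlow Happ]]. exists L. intros eps Heps.
  destruct (Happ (eps / 2)) as [n0 Hn0]; [lra|].
  set (M := b 0%nat + INR (S n0) * b 1%nat).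
  assert (HM : 0 <= M) by (unfold M; pose proof (b_nonneg 0); pose proof (b_nonneg 1);
                           pose proof (pos_INR (S n0)); nra).
  destruct (INR_unbounded (2 * M / eps)) as [N HN].
  exists N. intros n Hn. unfold R_dist.
  assert (Hs : 0 < INR (S n)) by (apply lt_0_INR; lia).
  assert (Hlarge : 2 * M < eps * INR (S n)).
  { assert (INR N <= INR (S n)) by (apply le_INR; lia).
    replace (2 * M) with (2 * M / eps * eps) by (field; lra). nra. }
  assert (Hsmall : M / INR (S n) < eps / 2).
  { apply (Rmult_lt_reg_r (INR (S n))); [exact Hs|].
    replace (M / INR (S n) * INR (S n)) with M by (field; lra). lra. }
  pose proof (subadd_ratio_bound (S n0) (S n) ltac:(lia) ltac:(lia)) as Hup.
  fold M in Hup. specialize (Hlow n).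
  rewrite Rabs_right by lra. lra.
Qed.
End Fekete.

Section Joins.
Context {X : Type} (f : X -> X) (U : list (X -> Prop)).

Definition word_concat (m : nat) (w1 w2 : nat -> nat) : nat -> nat :=
  fun i => if Nat.ltb i m then w1 i else w2 (i - m)%nat.

(* The members of the (m+n)-join are intersections of a member of the
   m-join with the f^m-preimage of a member of the n-join. *)
Lemma join_subcover_concat (m n k1 k2 : nat) :
  join_subcover_card f U m k1 -> join_subcover_card f U n k2 ->
  join_subcover_card f U (m + n) (k1 * k2).
Proof.
  intros [ws1 [Hlen1 [Hok1 Hcov1]]] [ws2 [Hlen2 [Hok2 Hcov2]]].
  exists (flat_map (fun w1 => map (word_concat m w1) ws2) ws1). split; [|split].
  - subst k1 k2. clear. induction ws1 as [|w ws IH]; simpl; [reflexivity|].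
    rewrite length_app, length_map, IH. reflexivity.
  - intros w Hw. apply in_flat_map in Hw as [w1 [Hw1 Hw2]].
    apply in_map_iff in Hw2 as [w2 [<- Hw2]].
    intros i Hi. unfold word_concat.
    destruct (Nat.ltb_spec i m); [apply Hok1 | apply Hok2]; auto; lia.
  - intros z. destruct (Hcov1 z) as [w1 [Hw1 Hz1]].
    destruct (Hcov2 (Nat.iter m f z)) as [w2 [Hw2 Hz2]].
    exists (word_concat m w1 w2). split.
    + apply in_flat_map. exists w1. split; [assumption | now apply in_map].
    + intros i Hi. unfold word_concat. destruct (Nat.ltb_spec i m); [now apply Hz1|].
      replace (Nat.iter i f z) with (Nat.iter (i - m) f (Nat.iter m f z))
        by (rewrite <- Nat.iter_add; f_equal; lia).
      apply Hz2. lia.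
Qed.

Definition is_cover : Prop :=
  forall z, exists i, (i < length U)%nat /\ nth i U (fun _ => True) z.

Lemma join_subcover_zero : join_subcover_card f U 0 1.
Proof.
  exists ((fun _ => 0%nat) :: nil). split; [reflexivity|split].
  - intros w _ i Hi. lia.
  - intros z. exists (fun _ => 0%nat). split; [now left | intros i Hi; lia].
Qed.

Lemma join_subcover_one : is_cover -> join_subcover_card f U 1 (length U).
Proof.
  intros Hcover. exists (map (fun i (_ : nat) => i) (seq 0 (length U))).
  split; [|split].
  - now rewrite length_map, length_seq.
  - intros w Hw i _. apply in_map_iff in Hw as [j [<- Hj]].
    apply in_seq in Hj. lia.
  - intros z. destruct (Hcover z) as [i [Hi Hz]].
    exists (fun _ => i). split.
    + apply in_map_iff. exists i. split; [reflexivity|]. apply in_seq. lia.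
    + intros j Hj. replace j with 0%nat by lia. exact Hz.
Qed.

Lemma min_subcover_exists (n : nat) : is_cover -> exists k, min_subcover_card f U n k.
Proof.
  intros Hcover.
  assert (Hex : exists k, join_subcover_card f U n k).
  { induction n as [|n [k Hk]]; [exists 1%nat; exact join_subcover_zero|].
    exists (k * length U)%nat. replace (S n) with (n + 1)%nat by lia.
    apply join_subcover_concat; [exact Hk | exact (join_subcover_one Hcover)]. }
  destruct (dec_inh_nat_subset_has_unique_least_element _ (fun k => classic _) Hex)
    as [k [[Hk Hmin] _]].
  exists k. split; assumption.
Qed.

(* On a nonempty space every subcover is nonempty. *)
Lemma min_subcover_pos (z : X) (n k : nat) : min_subcover_card f U n k -> (1 <= k)%nat.
Proof.
  intros [[ws [Hlen [_ Hcov]]] _]. destruct (Hcov z) as [w [Hw _]].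
  destruct ws; [destruct Hw | simpl in Hlen; lia].
Qed.

Lemma min_subcover_submult (m n km kn k : nat) :
  min_subcover_card f U m km -> min_subcover_card f U n kn ->
  min_subcover_card f U (m + n) k -> (k <= km * kn)%nat.
Proof.
  intros [Hm _] [Hn _] [_ Hmin]. apply Hmin, join_subcover_concat; assumption.
Qed.

(* h(f, U) exists: ln N(n) is nonnegative and subadditive. *)
Lemma cover_entropy_exists (z : X) : is_cover -> exists h, cover_entropy f U h.
Proof.
  intros Hcover.
  set (N := fun n => proj1_sig (constructive_indefinite_description _
                                  (min_subcover_exists n Hcover))).
  assert (HN : forall n, min_subcover_card f U n (N n))
    by (intro n; unfold N; destruct constructive_indefinite_description; assumption).
  assert (Hpos : forall n, 0 < INR (N n))
    by (intro n; apply lt_0_INR; pose proof (min_subcover_pos z _ _ (HN n)); lia).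
  destruct (fekete (fun n => ln (INR (N n)))) as [h Hh].
  - intro n. rewrite <- ln_1. apply ln_le_compat; [lra|].
    apply (le_INR 1). exact (min_subcover_pos z _ _ (HN n)).
  - intros m n. rewrite <- ln_mult by apply Hpos. apply ln_le_compat; [apply Hpos|].
    rewrite <- mult_INR. apply le_INR. apply (min_subcover_submult m n); apply HN.
  - exists h, N. split; assumption.
Qed.

Lemma cover_entropy_lower_bound (h c : R) (a : nat) :
  cover_entropy f U h -> (0 < a)%nat -> 0 < c ->
  (forall k K, join_subcover_card f U (a * k) K -> c ^ k <= INR K) ->
  ln c / INR a <= h.
Proof.
  intros [N [HN Hcv]] Ha Hc Hcount.
  apply (Un_cv_ge_frequently _ _ _ Hcv). intros N0.
  set (k := S N0). exists (a * k - 1)%nat. split; [unfold k; nia|].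
  replace (S (a * k - 1)) with (a * k)%nat by (unfold k; nia).
  destruct (HN (a * k)%nat) as [Hsub _].
  assert (Hck : 0 < c ^ k) by (apply pow_lt; exact Hc).
  assert (Hln : INR k * ln c <= ln (INR (N (a * k)%nat)))
    by (rewrite <- ln_pow by exact Hc; apply ln_le_compat; [|apply Hcount]; assumption).
  assert (HaR : 0 < INR a) by (apply lt_0_INR; lia).
  assert (HkR : 0 < INR k) by (apply lt_0_INR; unfold k; lia).
  rewrite mult_INR.
  replace (ln c / INR a) with (INR k * ln c / (INR a * INR k)) by (field; lra).
  unfold Rdiv. apply Rmult_le_compat_r; [left; apply Rinv_0_lt_compat; nra | exact Hln].
Qed.
End Joins.

Fixpoint bool_lists (k : nat) : list (list bool) :=
  match k with
  | O => nil :: nil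
  | S k => map (cons true) (bool_lists k) ++ map (cons false) (bool_lists k)
  end.

Lemma bool_lists_length (k : nat) : length (bool_lists k) = (2 ^ k)%nat.
Proof. induction k; simpl; [reflexivity|]. rewrite length_app, !length_map, IHk. lia. Qed.

Lemma bool_lists_spec (k : nat) (l : list bool) : In l (bool_lists k) <-> length l = k.
Proof.
  revert l; induction k as [|k IH]; intros l; simpl.
  - split; [intros [<- | []]; reflexivity | destruct l; [now left | discriminate]].
  - rewrite in_app_iff, !in_map_iff. split.
    + intros [[l' [<- Hl']] | [l' [<- Hl']]]; simpl; f_equal; now apply IH.
    + destruct l as [|[|] l]; simpl; intros Hl; [discriminate| left | right];
        exists l; split; [reflexivity | apply IH; lia | reflexivity | apply IH; lia].
Qed.

Lemma bool_lists_NoDup (k : nat) : NoDup (bool_lists k).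
Proof.
  induction k as [|k IH]; simpl; [constructor; [intros [] | constructor]|].
  apply NoDup_app.
  - apply NoDup_map_NoDup_ForallPairs; [|exact IH]. intros u v _ _ E. now injection E.
  - apply NoDup_map_NoDup_ForallPairs; [|exact IH]. intros u v _ _ E. now injection E.
  - intros l H1 H2. apply in_map_iff in H1 as [l1 [<- _]].
    apply in_map_iff in H2 as [l2 [E _]]. discriminate.
Qed.

Lemma realise_all_words {W : Type} (ws : list W) (g : W -> list bool) (k : nat) :
  (forall l, length l = k -> exists w, In w ws /\ g w = l) -> (2 ^ k <= length ws)%nat.
Proof.
  intros Hreal. rewrite <- bool_lists_length, <- (length_map g).
  apply NoDup_incl_length; [apply bool_lists_NoDup|].
  intros l Hl. apply bool_lists_spec in Hl. destruct (Hreal l Hl) as [w [Hw <-]].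
  now apply in_map.
Qed.

Lemma map_nth_seq_bool (l : list bool) :
  map (fun j => nth j l false) (seq 0 (length l)) = l.
Proof.
  induction l as [|b l IH]; simpl; [reflexivity|]. f_equal.
  rewrite <- seq_shift, map_map. exact IH.
Qed.

Section Itineraries.
Context {X : Type} (d : X -> X -> R) (f : X -> X).

Definition cr_chain (delta : R) (a : nat) (p q : X) (c : nat -> X) : Prop :=
  c 0%nat = p /\ c a = q /\
  (forall t, (t < a)%nat -> d (f (c t)) (c (S t)) <= delta) /\
  (forall t, (t <= a)%nat -> CR d f (c t)).

Definition chain_concat (L : nat) (c1 c2 : nat -> X) : nat -> X :=
  fun t => if Nat.leb t L then c1 t else c2 (t - L)%nat.

Lemma chain_concat_left (L : nat) (c1 c2 : nat -> X) (t : nat) :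
  (t <= L)%nat -> chain_concat L c1 c2 t = c1 t.
Proof. intros H. unfold chain_concat. destruct (Nat.leb_spec t L); [reflexivity | lia]. Qed.

Lemma chain_concat_right (L : nat) (c1 c2 : nat -> X) (t : nat) :
  c1 L = c2 0%nat -> (L <= t)%nat -> chain_concat L c1 c2 t = c2 (t - L)%nat.
Proof.
  intros E H. unfold chain_concat. destruct (Nat.leb_spec t L); [|reflexivity].
  replace t with L by lia. rewrite Nat.sub_diag. exact E.
Qed.

Lemma cr_chain_concat (delta : R) (L : nat) (p q r : X) (c1 c2 : nat -> X) :
  cr_chain delta L p q c1 -> cr_chain delta L q r c2 ->
  cr_chain delta (L + L) p r (chain_concat L c1 c2).
Proof.
  intros [Hp1 [Hq1 [Hstep1 Hcr1]]] [Hq2 [Hr2 [Hstep2 Hcr2]]].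
  assert (E : c1 L = c2 0%nat) by congruence.
  split; [|split; [|split]].
  - rewrite chain_concat_left by lia. exact Hp1.
  - rewrite chain_concat_right by (auto; lia). now replace (L + L - L)%nat with L by lia.
  - intros t Ht. destruct (Nat.lt_ge_cases t L).
    + rewrite !chain_concat_left by lia. auto.
    + rewrite !chain_concat_right by (auto; lia).
      replace (S t - L)%nat with (S (t - L)) by lia. apply Hstep2. lia.
  - intros t Ht. destruct (Nat.le_gt_cases t L).
    + rewrite chain_concat_left by lia. auto.
    + rewrite chain_concat_right by (auto; lia). apply Hcr2. lia.
Qed.

Variables x y : X.

Definition endpoint (b : bool) : X := if b then y else x.

(* From x ~ y: one length a with CR-chains of length a between any two points
   of {x, y}; x -> x and y -> y are round trips of two half-length chains. *)
Lemma chain_rel_blocks (delta : R) : 0 < delta -> chain_rel d f x y ->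
  exists a (blk : bool -> bool -> nat -> X), (0 < a)%nat /\
    forall p q, cr_chain delta a (endpoint p) (endpoint q) (blk p q).
Proof.
  intros Hd Hsim. destruct (Hsim delta Hd) as [m [N [Hm [HN Hchains]]]].
  destruct (Hchains N (le_n _))
    as [sx1 [sy1 [[_ Hx1] [[_ Hy1] [Hcr1 [Ex1 [Ex1' [Ey1 Ey1']]]]]]]].
  destruct (Hchains (2 * N)%nat ltac:(lia))
    as [sx2 [sy2 [[_ Hx2] [[_ Hy2] [Hcr2 [Ex2 [Ex2' [Ey2 Ey2']]]]]]]].
  replace (m * (2 * N))%nat with (m * N + m * N)%nat in * by lia.
  set (L := (m * N)%nat) in *.
  assert (Gxy1 : cr_chain delta L x y sx1) by (repeat split; auto; intros; apply Hcr1; auto).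
  assert (Gyx1 : cr_chain delta L y x sy1) by (repeat split; auto; intros; apply Hcr1; auto).
  assert (Gxy2 : cr_chain delta (L + L) x y sx2)
    by (repeat split; auto; intros; apply Hcr2; auto).
  assert (Gyx2 : cr_chain delta (L + L) y x sy2)
    by (repeat split; auto; intros; apply Hcr2; auto).
  exists (L + L)%nat,
    (fun p q => match p, q with
                | false, true => sx2 | true, false => sy2
                | false, false => chain_concat L sx1 sy1
                | true, true => chain_concat L sy1 sx1 end).
  split; [unfold L; nia|].
  intros [|] [|]; simpl; auto; eapply cr_chain_concat; eauto.
Qed.

Definition splice (a : nat) (blk : bool -> bool -> nat -> X) (s : nat -> bool)
  (i : nat) : X :=
  blk (s (i / a)%nat) (s (S (i / a))) (i mod a).

Lemma splice_block (a : nat) (blk : bool -> bool -> nat -> X) (s : nat -> bool)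
  (j t : nat) : (t < a)%nat -> splice a blk s (a * j + t) = blk (s j) (s (S j)) t.
Proof.
  intros Ht. unfold splice.
  rewrite <- (Nat.div_unique (a * j + t) a j t Ht eq_refl).
  rewrite <- (Nat.mod_unique (a * j + t) a j t Ht eq_refl). reflexivity.
Qed.

Lemma splice_pseudo_orbit (delta : R) (a : nat) (blk : bool -> bool -> nat -> X)
  (s : nat -> bool) :
  (0 < a)%nat -> (forall p q, cr_chain delta a (endpoint p) (endpoint q) (blk p q)) ->
  (forall i, CR d f (splice a blk s i)) /\
  (forall i, d (f (splice a blk s i)) (splice a blk s (S i)) <= delta).
Proof.
  intros Ha Hblk.
  assert (Hdec : forall i, exists j t, (t < a)%nat /\ i = (a * j + t)%nat)
    by (intro i; exists (i / a)%nat, (i mod a)%nat;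
        split; [apply Nat.mod_upper_bound | apply Nat.div_mod]; lia).
  split; intro i; destruct (Hdec i) as [j [t [Ht ->]]]; rewrite splice_block by exact Ht;
    destruct (Hblk (s j) (s (S j))) as [_ [Hend [Hstep Hcr]]].
  - apply Hcr. lia.
  - destruct (Nat.lt_ge_cases (S t) a) as [Hlt | Hge].
    + replace (S (a * j + t)) with (a * j + S t)%nat by lia.
      rewrite splice_block by exact Hlt. auto.
    + (* the last step of block j ends where block j+1 starts *)
      replace (S (a * j + t)) with (a * S j + 0)%nat by nia.
      rewrite splice_block by exact Ha.
      destruct (Hblk (s (S j)) (s (S (S j)))) as [Hstart _].
      rewrite Hstart, <- Hend. replace a with (S t) by lia. apply Hstep. lia.
Qed.

Lemma shadow_itinerary (delta eps : R) (a : nat) (blk : bool -> bool -> nat -> X) :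
  (0 < a)%nat -> (forall p q, cr_chain delta a (endpoint p) (endpoint q) (blk p q)) ->
  (forall ys : nat -> X, (forall i, CR d f (ys i)) ->
      (forall i, d (f (ys i)) (ys (S i)) <= delta) ->
      exists z, CR d f z /\ forall i, d (Nat.iter i f z) (ys i) <= eps) ->
  forall s : nat -> bool, exists z, forall j, d (Nat.iter (a * j) f z) (endpoint (s j)) <= eps.
Proof.
  intros Ha Hblk Hshadow s.
  destruct (splice_pseudo_orbit delta a blk s Ha Hblk) as [Hcr Hstep].
  destruct (Hshadow _ Hcr Hstep) as [z [_ Hz]].
  exists z. intros j. specialize (Hz (a * j)%nat).
  rewrite <- (Nat.add_0_r (a * j)) in Hz at 2. rewrite splice_block in Hz by exact Ha.
  destruct (Hblk (s j) (s (S j))) as [Hstart _]. rewrite Hstart in Hz. exact Hz.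
Qed.
End Itineraries.

(* Any subcover of the (a k)-join of {X \ A, X \ B} has at least 2^k members:
   a member of the join fixes, at each time a j, whether the orbit avoids A
   (hence is not eps-close to x) or avoids B. *)
Lemma itinerary_subcover_bound (X : Type) (d : X -> X -> R) (f : X -> X)
  (Hsym : forall u v, d u v = d v u) (Hshadow : shadowing_on_CR d f)
  (x y : X) (Hsim : chain_rel d f x y) (A B : X -> Prop) (eps : R) (Heps : 0 < eps)
  (HA : forall z, ball d x eps z -> A z) (HB : forall z, ball d y eps z -> B z) :
  exists a, (0 < a)%nat /\ forall k K,
    join_subcover_card f ((fun z => ~ A z) :: (fun z => ~ B z) :: nil) (a * k) K ->
    (2 ^ k <= K)%nat.
Proof.
  destruct (Hshadow (eps / 2)) as [delta [Hd Hsh]]; [lra|].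
  destruct (chain_rel_blocks d f x y delta Hd Hsim) as [a [blk [Ha Hblk]]].
  exists a. split; [exact Ha|]. intros k K [ws [<- [Hok Hcov]]].
  apply (realise_all_words ws (fun w => map (fun j => Nat.eqb (w (a * j)%nat) 0) (seq 0 k))).
  intros l Hl.
  destruct (shadow_itinerary d f x y delta (eps / 2) a blk Ha Hblk Hsh
              (fun j => nth j l false)) as [z Hz].
  destruct (Hcov z) as [w [Hw Hmem]]. exists w. split; [exact Hw|].
  rewrite <- (map_nth_seq_bool l), Hl. apply map_ext_in. intros j Hj. apply in_seq in Hj.
  assert (Hlt : (a * j < a * k)%nat) by nia.
  specialize (Hmem _ Hlt). specialize (Hok w Hw _ Hlt). simpl in Hok.
  specialize (Hz j). simpl in Hz.
  destruct (nth j l false); simpl in Hz.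
  - assert (B (Nat.iter (a * j) f z)) by (apply HB; unfold ball; rewrite Hsym; lra).
    destruct (w (a * j)%nat) as [|[|]]; simpl in Hmem |- *; tauto || lia.
  - assert (A (Nat.iter (a * j) f z)) by (apply HA; unfold ball; rewrite Hsym; lra).
    destruct (w (a * j)%nat) as [|[|]]; simpl in Hmem |- *; tauto || lia.
Qed.

Lemma separated_entropy (X : Type) (d : X -> X -> R) (f : X -> X)
  (Hsym : forall u v, d u v = d v u) (Hshadow : shadowing_on_CR d f)
  (x y : X) (Hsim : chain_rel d f x y) (A B : X -> Prop)
  (HAB : forall z, A z -> B z -> False) (eps : R) (Heps : 0 < eps)
  (HA : forall z, ball d x eps z -> A z) (HB : forall z, ball d y eps z -> B z) :
  exists a : nat, (0 < a)%nat /\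
    exists h, cover_entropy f ((fun z => ~ A z) :: (fun z => ~ B z) :: nil) h
              /\ h >= ln 2 / INR a /\ 0 < h.
Proof.
  set (U := (fun z => ~ A z) :: (fun z => ~ B z) :: nil).
  destruct (itinerary_subcover_bound X d f Hsym Hshadow x y Hsim A B eps Heps HA HB)
    as [a [Ha Hcount]].
  assert (Hcover : is_cover U).
  { intros z. destruct (classic (A z)) as [HAz | HAz].
    - exists 1%nat. split; [simpl; lia|]. simpl. eauto.
    - exists 0%nat. split; [simpl; lia|]. exact HAz. }
  destruct (cover_entropy_exists f U x Hcover) as [h Hh].
  assert (Hbound : ln 2 / INR a <= h).
  { apply (cover_entropy_lower_bound f U h 2 a Hh Ha); [lra|].
    intros k K HK. replace 2 with (INR 2) by reflexivity.
    rewrite <- pow_INR. apply le_INR, Hcount, HK. }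
  assert (Hpos : 0 < ln 2 / INR a).
  { apply Rdiv_lt_0_compat; [rewrite <- ln_1; apply ln_increasing; lra|].
    apply lt_0_INR. exact Ha. }
  exists a. split; [exact Ha|]. exists h. split; [exact Hh|]. split; lra.
Qed.

Theorem mainTheorem8 (X : Type) (d : X -> X -> R) (f : X -> X)
  (Hmetric : is_metric d) (Hcompact : compact_space d)
  (Hcont : continuous d f) (Hshadow : shadowing_on_CR d f)
  (x y : X) (HxCR : CR d f x) (HyCR : CR d f y) (Hxy : x <> y)
  (Hsim : chain_rel d f x y) :
  (forall eps, 0 < eps -> eps < d x y / 2 ->
     exists a : nat, (0 < a)%nat /\
       exists h, cover_entropy f
                   ((fun z => ~ ball d x eps z) :: (fun z => ~ ball d y eps z) :: nil) h
                 /\ h >= ln 2 / INR a /\ 0 < h)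
  /\ entropy_pair d f x y.
Proof.
  destruct Hmetric as [_ [_ [Hsym Htri]]].
  split.
  - (* the eps-balls are disjoint because eps < d(x,y)/2 *)
    intros eps Heps Hsmall.
    assert (Hdisj : forall z, ball d x eps z -> ball d y eps z -> False).
    { intros z Hx Hy. unfold ball in *. pose proof (Htri x z y). rewrite (Hsym z y) in *. lra. }
    exact (separated_entropy X d f Hsym Hshadow x y Hsim _ _ Hdisj eps Heps
             (fun _ H => H) (fun _ H => H)).
  - (* closed neighbourhoods contain balls of the common radius min rA rB *)
    split; [exact Hxy|]. intros A B [_ [rA [HrA HA]]] [_ [rB [HrB HB]]] HAB.
    destruct (separated_entropy X d f Hsym Hshadow x y Hsim A B HAB (Rmin rA rB))
      as [a [_ [h [Hh [_ Hpos]]]]].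
    + now apply Rmin_pos.
    + intros z Hz. apply HA. unfold ball in *. pose proof (Rmin_l rA rB). lra.
    + intros z Hz. apply HB. unfold ball in *. pose proof (Rmin_r rA rB). lra.
    + exists h. split; assumption.
Qed.
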